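(* Let $G$ be a finite simple graph with $n$ vertices and minimum degree $\delta \ge 10^6$. Then $$\gamma_s(G) \le \frac{\sqrt{6\ln(\delta+1)} + 1.21}{\sqrt{\delta+1}}\, n.$$
   Context: For a vertex $v$ of $G$, $N[v]$ denotes the closed neighbourhood of $v$ (i.e. $v$ together with its neighbours). A signed domination function of $G$ is a function $f: V(G) \to \{-1, 1\}$ such that $\sum_{x \in N[v]} f(x) \ge 1$ for every vertex $v \in V(G)$. The weight of $f$ is $f(V(G)) = \sum_{v \in V(G)} f(v)$. The signed domination number $\gamma_s(G)$ is the minimum weight of a signed domination function of $G$. *)

From HB Require Import structures.
From mathcomp Require Import all_boot all_order all_algebra.
From mathcomp Require Import all_classical all_reals all_analysis.
Set Implicit Arguments. Unset Strict Implicit. Unset Printing Implicit Defensive.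
Import Order.TTheory GRing.Theory Num.Theory.
Local Open Scope ring_scope.

Definition simple_graph (T : finType) (e : rel T) : Prop :=
  symmetric e /\ irreflexive e.

Definition closed_nbhd (T : finType) (e : rel T) (v : T) : {set T} :=
  v |: [set u | e v u].

Definition degree (T : finType) (e : rel T) (v : T) : nat := #|[set u | e v u]|.

Definition is_min_degree (T : finType) (e : rel T) (delta : nat) : Prop :=
  (forall v, (delta <= degree e v)%N) /\ (exists v, degree e v = delta).

Definition signed_dom_fun (T : finType) (e : rel T) (f : T -> int) : Prop :=
  (forall v, f v = 1 \/ f v = -1) /\
  (forall v, 1 <= \sum_(x in closed_nbhd e v) f x).

Definition weight (T : finType) (f : T -> int) : int := \sum_(x : T) f x.

Definition is_signed_domination_number (T : finType) (e : rel T) (g : int) : Prop :=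
  (exists f, signed_dom_fun e f /\ weight f = g) /\
  (forall f, signed_dom_fun e f -> g <= weight f).

From HB Require Import structures.
From mathcomp Require Import all_boot all_order all_algebra.
From mathcomp Require Import all_classical all_reals all_analysis.
From mathcomp Require Import ring lra.
Import Order.TTheory GRing.Theory Num.Theory.
Local Open Scope ring_scope.

Set Implicit Arguments.
Unset Strict Implicit.

(* Choose f : V -> {-1,1} at random, independently with P(f v = 1) = (1 + eps)/2 where
   eps^2 = 6 ln (delta+1) / (delta+1), and repair it by switching to +1 the closed
   neighbourhood of every vertex whose closed-neighbourhood sum s_v is <= 0.  For any
   0 < a <= 1 the repair costs at most 2 |N[v]| a^(s_v) per vertex v; with a = 1 - eps,
   E[a^(s_v)] = (1 - eps^2/2)^|N[v]| <= (delta+1)^-3 because |N[v]| >= delta + 1, while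
   E[weight f] = eps n.  Some f does no worse than the expectation.  The hypothesis
   delta >= 10^6 is only used through delta + 1 >= 100, where the per-vertex cost is
   already far below 1.21 / sqrt (delta+1). *)

Section LogEstimates.
Variable R : realType.
Implicit Types x : R.

Lemma ln_ge_third x : 3/2 <= x -> 1/3 <= ln x.
Proof.
move=> x_ge.
have x_gt0 : 0 < x by lra.
rewrite -ler_expR lnK ?posrE //.
have := expR_ge1Dx (- (1/3) : R).
have : expR (1/3 : R) * expR (- (1/3)) = 1 by rewrite -expRD subrr expR0.
have := expR_gt0 (1/3 : R).
nra.
Qed.

(* [ln x < 6] suffices when [x >= 36]; otherwise [x >= 1 + ln x ^ 3 / 6 >= 6 ln x]. *)
Lemma six_ln_lt x : 36 <= x -> 6 * ln x < x.
Proof.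
move=> x_ge.
have ln_ge0 : 0 <= ln x by apply: ln_ge0; lra.
have := expR_ge1Dxn 2 ln_ge0.
rewrite lnK ?posrE; last lra.
have -> : (2.+1)`!%:R = 6 :> R by [].
case: (ltrP (ln x) 6) => ln6; first lra.
nra.
Qed.

Lemma sqrt_six_ln_ratio x (eps := Num.sqrt (6 * ln x) / Num.sqrt x) :
  36 <= x -> [/\ 0 <= eps, eps < 1 & eps ^+ 2 = 6 * ln x / x].
Proof.
move=> x_ge.
have ln_lt : 6 * ln x < x by exact: six_ln_lt.
have ln_ge0 : 0 <= ln x by apply: ln_ge0; lra.
have eps_ge0 : 0 <= eps by rewrite divr_ge0 ?sqrtr_ge0.
have eps_sqr : eps ^+ 2 = 6 * ln x / x by rewrite expr_div_n !sqr_sqrtr //; lra.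
split=> //; have : eps ^+ 2 < 1 by rewrite eps_sqr ltr_pdivrMr; lra.
nra.
Qed.

End LogEstimates.

Section PowerDecay.
Variables (R : realType) (n : nat).
Hypothesis n_ge100 : (100 <= n)%N.

Local Notation N := (n%:R : R).
Local Notation c := (1 - 3 * ln N / N).

Let N_ge100_real : 100 <= N. Proof. by rewrite (ler_nat R 100). Qed.

Lemma decay_base_ge0 : 0 <= c.
Proof.
have N_ge := N_ge100_real.
have ln_lt : 6 * ln N < N by apply: six_ln_lt; lra.
have ln_ge : 0 <= ln N by apply: ln_ge0; lra.
rewrite subr_ge0 ler_pdivrMr; lra.
Qed.

Lemma decay_pow_le : c ^+ n * N ^+ 3 <= 1.
Proof.
have N_gt0 : 0 < N by have := N_ge100_real; lra.
have c_le : c <= expR (- (3 * ln N / N)) by have := expR_ge1Dx (- (3 * ln N / N)); lra.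
have : c ^+ n <= expR (- (3 * ln N / N)) ^+ n.
  by rewrite lerXn2r // ?nnegrE ?expR_ge0 ?decay_base_ge0.
rewrite -expRM_natl (_ : N * _ = - (3%:R * ln N)); last by field; lra.
rewrite expRN expRM_natl lnK ?posrE // => pow_le.
by rewrite -ler_pdivlMr ?exprn_gt0 // div1r.
Qed.

Lemma decay_mulr_pow_le m : (n <= m)%N -> m%:R * c ^+ m <= N * c ^+ n.
Proof.
have N_ge := N_ge100_real.
move=> /subnKC <-; elim: (m - n)%N => [|k IH]; first by rewrite addn0.
have ln_ge : 1/3 <= ln N by apply: ln_ge_third; lra.
have N_le : N <= (n + k)%:R by rewrite ler_nat leq_addr.
have step : (n + k).+1%:R * c <= (n + k)%:R.
  have : 1 <= ((n + k)%:R + 1) * (3 * ln N / N).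
    by rewrite mulrA ler_pdivlMr; nra.
  rewrite -natr1; lra.
apply: le_trans IH; rewrite addnS exprS mulrA.
have := exprn_ge0 (n + k) decay_base_ge0.
nra.
Qed.

Lemma two_mulr_decay_pow_le m :
  (n <= m)%N -> 2 * m%:R * c ^+ m <= 121 / 100 / Num.sqrt N.
Proof.
move=> nm.
have N_ge := N_ge100_real.
have sqrt_gt0 : 0 < Num.sqrt N by rewrite sqrtr_gt0; lra.
have sqrt_le : Num.sqrt N <= N.
  have : Num.sqrt N ^+ 2 = N by rewrite sqr_sqrtr //; lra.
  nra.
have pow_le : N * c ^+ n * N <= 1 / N.
  rewrite ler_pdivlMr; last lra.
  have -> : N * c ^+ n * N * N = c ^+ n * N ^+ 3 by ring.
  exact: decay_pow_le.
have mc_ge0 := mulr_ge0 (ler0n R m) (exprn_ge0 m decay_base_ge0).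
have sqrt_step : m%:R * c ^+ m * Num.sqrt N <= m%:R * c ^+ m * N.
  by rewrite ler_wpM2l.
have decay_step : m%:R * c ^+ m * N <= N * c ^+ n * N.
  by rewrite ler_wpM2r ?decay_mulr_pow_le //; lra.
have inv_le : 1 / N <= 1 / 100 by rewrite ler_pdivrMr; lra.
rewrite ler_pdivlMr //.
lra.
Qed.

End PowerDecay.

Definition pm1 {R : pzRingType} (b : bool) : R := if b then 1 else -1.

Lemma pm1_int (R : pzRingType) (b : bool) : (pm1 b : int)%:~R = pm1 b :> R.
Proof. by case: b. Qed.

Section ProductMeasure.
Variables (R : comNzRingType) (T : finType) (q : R).

Definition bernoulli_weight (f : {ffun T -> bool}) : R :=
  \prod_i (if f i then q else 1 - q).

Lemma sum_ffun_prod (F : T -> bool -> R) :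
  \sum_(f : {ffun T -> bool}) \prod_i F i (f i) = \prod_i (F i true + F i false).
Proof. by rewrite -bigA_distr_bigA; apply: eq_bigr => i _; rewrite big_bool. Qed.

Lemma expect_prod (H : T -> bool -> R) :
  \sum_f bernoulli_weight f * \prod_i H i (f i) =
  \prod_i (q * H i true + (1 - q) * H i false).
Proof.
rewrite -(sum_ffun_prod (fun i b => (if b then q else 1 - q) * H i b)).
apply: eq_bigr => f _.
by rewrite -big_split.
Qed.

Lemma sum_bernoulli_weight : \sum_f bernoulli_weight f = 1.
Proof.
transitivity (\sum_f bernoulli_weight f * \prod_(i : T) (1 : R)).
  by apply: eq_bigr => f _; rewrite big1 ?mulr1.
by rewrite (expect_prod (fun _ _ => 1)) big1 // => i _; rewrite !mulr1 addrC subrK.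
Qed.

Lemma expect_pm1 x : \sum_f bernoulli_weight f * pm1 (f x) = q - (1 - q).
Proof.
transitivity (\sum_f bernoulli_weight f *
                \prod_i (if i == x then pm1 (f i) else 1)).
  by apply: eq_bigr => f _; rewrite -big_mkcond big_pred1_eq.
rewrite (expect_prod (fun i b => if i == x then pm1 b else 1)).
by rewrite (bigD1 x) //= eqxx big1 => [|i /negbTE ->]; rewrite ?mulr1 ?mulrN1 // addrC subrK.
Qed.

End ProductMeasure.

Lemma bernoulli_weight_ge0 (R : numDomainType) (T : finType) (q : R) :
  0 <= q <= 1 -> forall f : {ffun T -> bool}, 0 <= bernoulli_weight q f.
Proof.
by move=> /andP[q_ge0 q_le1] f; apply: prodr_ge0 => i _; case: (f i); rewrite ?subr_ge0.
Qed.

Lemma exprz_sum_pm1 (R : unitRingType) (T : finType) (A : {set T}) (f : T -> bool) (a : R) :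
  a \is a GRing.unit ->
  a ^ (\sum_(x in A) pm1 (f x) : int) = \prod_(x in A) (if f x then a else a^-1).
Proof.
move=> a_unit; rewrite (big_morph (fun z : int => a ^ z) (exprzDr a_unit) (expr0z a)).
by apply: eq_bigr => x _; case: (f x); rewrite ?expr1z ?exprN1z.
Qed.

Lemma expect_exprz_sum_pm1 (R : comUnitRingType) (T : finType) (q a : R) (A : {set T}) :
  a \is a GRing.unit ->
  \sum_(f : {ffun T -> bool}) bernoulli_weight q f * a ^ (\sum_(x in A) pm1 (f x) : int) =
  (q * a + (1 - q) * a^-1) ^+ #|A|.
Proof.
move=> a_unit.
transitivity (\sum_(f : {ffun T -> bool}) bernoulli_weight q f *
   \prod_i (if i \in A then (if f i then a else a^-1) else 1)).
  by apply: eq_bigr => f _; rewrite exprz_sum_pm1 // big_mkcond.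
rewrite (@expect_prod _ _ q (fun i b => if i \in A then (if b then a else a^-1) else 1)).
rewrite -prodr_const [RHS]big_mkcond; apply: eq_bigr => i _.
by case: (i \in A); rewrite // !mulr1 addrC subrK.
Qed.

Lemma biased_pm1_mean (R : numFieldType) (eps : R) :
  (1 + eps) / 2 - (1 - (1 + eps) / 2) = eps.
Proof. by field. Qed.

Lemma biased_exprz_mean (R : numFieldType) (eps : R) : eps != 1 ->
  (1 + eps) / 2 * (1 - eps) + (1 - (1 + eps) / 2) * (1 - eps)^-1 = 1 - eps ^+ 2 / 2.
Proof. by move=> eps_neq1; field; rewrite subr_eq0 eq_sym. Qed.

Lemma lower_bound_le_average (R : numDomainType) (I : finType) (w F : I -> R) x :
  (forall i, 0 <= w i) -> \sum_i w i = 1 -> (forall i, x <= F i) ->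
  x <= \sum_i w i * F i.
Proof.
move=> w_ge0 w_sum1 x_le; rewrite -[x]mul1r -w_sum1 mulr_suml.
by apply: ler_sum => i _; rewrite ler_wpM2l.
Qed.

Section SignedDomination.
Variables (T : finType) (e : rel T).
Local Notation N := (closed_nbhd e).

Lemma mem_closed_nbhd v : v \in N v.
Proof. exact: setU11. Qed.

Lemma card_closed_nbhd v : irreflexive e -> #|N v| = (degree e v).+1.
Proof. by move=> e_irr; rewrite cardsU1 inE e_irr. Qed.

Definition nbhd_sum (f : T -> bool) v : int := \sum_(x in N v) pm1 (f x).

Definition deficient (f : T -> bool) v : bool := nbhd_sum f v <= 0.

Definition repair (f : T -> bool) x : int :=
  pm1 (f x || [exists v, deficient f v && (x \in N v)]).

Lemma repair_signed_dom f : signed_dom_fun e (repair f).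
Proof.
split=> [x | v]; first by rewrite /repair /pm1; case: ifP; [left | right].
have [def_v | ok_v] := boolP (deficient f v).
  rewrite (eq_bigr (fun _ => 1)) => [|x x_v]; last first.
    by rewrite /repair (_ : [exists _, _]) ?orbT //; apply/existsP; exists v; rewrite def_v.
  by rewrite sumr_const ler1n card_gt0; apply/set0Pn; exists v; exact: mem_closed_nbhd.
apply: le_trans (_ : nbhd_sum f v <= _).
  by rewrite -gtz0_ge1 ltNge.
by apply: ler_sum => x _; rewrite /repair /pm1; case: (f x) => //=; case: ifP.
Qed.

Lemma repair_le f x :
  repair f x <= pm1 (f x) + 2 * \sum_(v | deficient f v) (x \in N v)%:Z.
Proof.
set S := \sum_(v | _) _; have S_ge0 : 0 <= S by apply: sumr_ge0.
rewrite /repair /pm1; case: (f x) => /=; first by rewrite lerDl mulr_ge0.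
case: ifP => [/existsP[v /andP[def_v x_v]] | _]; last by rewrite lerDl mulr_ge0.
have S_ge1 : 1 <= S by rewrite /S (bigD1 v) //= x_v lerDl sumr_ge0.
by rewrite -lerBlDl opprK (_ : 1 + 1 = 2 * 1) // ler_pM2l.
Qed.

Lemma weight_repair_le f :
  weight (repair f) <= \sum_x pm1 (f x) + 2 * \sum_(v | deficient f v) #|N v|%:Z.
Proof.
apply: le_trans (ler_sum _ (fun x _ => repair_le f x)) _.
rewrite big_split /= -mulr_sumr exchange_big /=.
rewrite lerD2l ler_pM2l // le_eqVlt; apply/predU1P; left.
apply: eq_bigr => v _.
rewrite (eq_bigr (fun x => if x \in N v then 1 else 0)) => [|x _]; last by case: (_ \in _).
by rewrite -big_mkcond /= sumr_const natz.
Qed.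

Variable R : realFieldType.

Definition signed_cost (a : R) (f : T -> bool) : R :=
  \sum_x pm1 (f x) + \sum_v 2 * #|N v|%:R * a ^ nbhd_sum f v.

Lemma signed_domination_le_cost g (a : R) f :
  0 < a <= 1 -> is_signed_domination_number e g -> g%:~R <= signed_cost a f.
Proof.
move=> /andP[a_gt0 a_le1] [_ g_min].
have := le_trans (g_min _ (repair_signed_dom f)) (weight_repair_le f).
rewrite -(ler_int R) => /le_trans; apply.
rewrite rmorphD rmorphM !rmorph_sum /=.
under eq_bigr do rewrite pm1_int.
rewrite lerD2l mulr_sumr [leLHS]big_mkcond /=; apply: ler_sum => v _.
have cost_ge0 : 0 <= 2 * #|N v|%:R :> R by rewrite mulr_ge0.
case: ifP => [def_v | _]; last by rewrite mulr_ge0 // exprz_ge0 // ltW.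
rewrite /= pmulrn intz ler_peMr //.
rewrite -[nbhd_sum f v]opprK -exprz_inv -(expr0z a^-1).
by apply: ler_weXz2l; rewrite ?invf_ge1 // oppr_ge0.
Qed.

Lemma expect_signed_cost (q a : R) : a != 0 ->
  \sum_(f : {ffun T -> bool}) bernoulli_weight q f * signed_cost a f =
  #|T|%:R * (q - (1 - q)) +
  \sum_v 2 * #|N v|%:R * (q * a + (1 - q) * a^-1) ^+ #|N v|.
Proof.
move=> a_neq0; rewrite /signed_cost.
under eq_bigr do rewrite mulrDr !mulr_sumr.
rewrite big_split /= exchange_big [X in _ + X]exchange_big /=; congr (_ + _).
  by under eq_bigr do rewrite expect_pm1; rewrite sumr_const mulr_natl.
apply: eq_bigr => v _; rewrite -(@expect_exprz_sum_pm1 _ _ q) ?unitfE // mulr_sumr.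
by apply: eq_bigr => f _; rewrite mulrCA.
Qed.

End SignedDomination.

Unset Implicit Arguments.

Theorem theorem5 (R : realType) (T : finType) (e : rel T) (delta : nat) (g : int) :
  simple_graph e ->
  is_min_degree e delta ->
  (10 ^ 6 <= delta)%N ->
  is_signed_domination_number e g ->
  (g%:~R : R) <=
    (Num.sqrt (6 * ln (delta.+1%:R)) + 121 / 100) / Num.sqrt (delta.+1%:R)
      * (#|T|%:R).
Proof.
move=> [_ e_irr] [delta_min _] delta_ge g_sd.
have n_ge100 : (100 <= delta.+1)%N by apply: leq_trans (leqW delta_ge).
set N : R := delta.+1%:R.
have [|eps_ge0 eps_lt1 eps_sqr] := @sqrt_six_ln_ratio R N.
  by rewrite /N (ler_nat R 36) (leq_trans _ n_ge100).
set eps := Num.sqrt (6 * ln N) / Num.sqrt N in eps_ge0 eps_lt1 eps_sqr.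
have q_01 : 0 <= (1 + eps) / 2 <= 1 by apply/andP; split; lra.
have a_gt0 : 0 < 1 - eps by lra.
have a_01 : 0 < 1 - eps <= 1 by rewrite a_gt0; lra.
have := lower_bound_le_average (bernoulli_weight_ge0 q_01)
  (sum_bernoulli_weight T _) (fun f => signed_domination_le_cost f a_01 g_sd).
move/le_trans; apply.
rewrite expect_signed_cost ?(gt_eqF a_gt0) // (biased_pm1_mean eps).
rewrite (biased_exprz_mean (negbT (lt_eqF eps_lt1))).
rewrite eps_sqr (_ : 6 * ln N / N / 2 = 3 * ln N / N); last by field.
rewrite [in leRHS]mulrDl [in leRHS]mulrDl -/eps [eps * _]mulrC lerD2l.
have -> : 121 / 100 / Num.sqrt N * #|T|%:R = \sum_(v : T) 121 / 100 / Num.sqrt N.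
  by rewrite sumr_const mulr_natr.
apply: ler_sum => v _; apply: two_mulr_decay_pow_le => //.
by rewrite card_closed_nbhd // ltnS.
Qed.
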